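(* Let $G$ be a graph, let $k\ge 0$, let $C\subseteq V(G)$, and let $x_0\in V(G)\setminus C$, such that $G[C]$ is connected, $x_0$ has a neighbour in $C$, and $\chi(C)>k\,\chi^1(G)$. Then there is an induced path $x_0\hbox{-}\cdots\hbox{-}x_k$ of $G$ with $x_1,\ldots,x_k\in C$, and a subset $C'$ of $C$, such that: $x_0,\ldots,x_k\notin C'$; $G[C']$ is connected; $x_k$ has a neighbour in $C'$, and $x_0,\ldots,x_{k-1}$ have no neighbours in $C'$; and $\chi(C')\ge \chi(C)-k\,\chi^1(G)$.
   Context: Graphs are finite and simple. For $X\subseteq V(G)$, $\chi(X)$ means $\chi(G[X])$. $N^1[v]$ is the set consisting of $v$ and its neighbours, and $\chi^1(G)$ is the maximum of $\chi(N^1[v])$ over all $v\in V(G)$ (and $0$ for the null graph). *)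

From mathcomp Require Import all_boot.
Set Implicit Arguments. Unset Strict Implicit. Unset Printing Implicit Defensive.

(* A finite simple graph: vertex type T : finType, adjacency e : rel T,
   assumed symmetric and irreflexive in the theorem. *)
Section Graph.
Variables (T : finType) (e : rel T).

Definition colorable (X : {set T}) (k : nat) : bool :=
  [exists f : {ffun T -> 'I_k},
     [forall x in X, forall y in X, (x != y) && e x y ==> (f x != f y)]].

Lemma colorable_exists (X : {set T}) : exists k, colorable X k.
Proof.
exists #|T|; apply/existsP; exists [ffun x => enum_rank x].
apply/forallP => x; apply/implyP => _; apply/forallP => y; apply/implyP => _.
apply/implyP => /andP [nxy _]; rewrite !ffunE.
by apply: contra nxy => /eqP /enum_rank_inj ->.
Qed.

Definition chi (X : {set T}) : nat := ex_minn (colorable_exists X).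

Definition nbhd1 (v : T) : {set T} := [set u | (u == v) || e v u].

(* chi^1(G) = max_v chi(N^1[v]), and 0 for the null graph *)
Definition chi1 : nat := \max_(v : T) chi (nbhd1 v).

Definition connected_set (X : {set T}) : Prop :=
  X != set0 /\
  forall x y, x \in X -> y \in X ->
    connect [rel a b | [&& e a b, a \in X & b \in X]] x y.

Definition has_nbr_in (v : T) (X : {set T}) : bool := [exists u in X, e v u].

Definition induced_path (k : nat) (p : 'I_k.+1 -> T) : Prop :=
  injective p /\
  forall i j : 'I_k.+1, e (p i) (p j) = ((i.+1 == j) || (j.+1 == i)).

End Graph.

From mathcomp Require Import all_boot zify.
Set Implicit Arguments. Unset Strict Implicit. Unset Printing Implicit Defensive.

(* Induction on k.  Let v = x_k be the end of the path built so far and C' the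
   current set, with chi(C') > chi^1(G).  Split C' into the neighbours N of v,
   which lie in N^1[v] and hence have chromatic number at most chi^1(G), and
   the rest R.  Some component D of G[R] has chi(D) >= chi(R) >= chi(C') - chi^1(G).
   Since G[C'] is connected and v has a neighbour in C' \ D, an edge of G[C']
   leaves D; its other end y cannot lie in R, so y is a neighbour of v, and
   x_{k+1} := y, C'' := D continue the induction. *)

Section Colorings.
Variables (T : finType) (e : rel T).
Hypothesis e_sym : symmetric e.

Definition proper_on (S : eqType) (X : {set T}) (f : T -> S) : Prop :=
  forall x y, x \in X -> y \in X -> x != y -> e x y -> f x != f y.

Lemma colorableP (X : {set T}) k :
  reflect (exists f : T -> 'I_k, proper_on X f) (colorable e X k).
Proof.
apply: (iffP existsP) => [[f /forallP fP] | [f fP]].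
  exists f => x y xX yX nxy exy.
  by move: (fP x); rewrite xX => /forallP/(_ y); rewrite yX nxy exy.
exists [ffun x => f x]; apply/forallP => x; apply/implyP => xX.
apply/forallP => y; apply/implyP => yX; apply/implyP => /andP [nxy exy].
by rewrite !ffunE fP.
Qed.

Lemma proper_on_comp (S S' : eqType) (X : {set T}) (f : T -> S) (g : S -> S') :
  injective g -> proper_on X f -> proper_on X (g \o f).
Proof. by move=> g_inj fP x y xX yX nxy exy; rewrite /= (inj_eq g_inj) fP. Qed.

Lemma proper_onU (S : eqType) (A B : {set T}) (f g : T -> S) :
  proper_on A f -> proper_on B g ->
  (forall x y, x \in A -> y \in B :\: A -> e x y -> f x != g y) ->
  proper_on (A :|: B) (fun x => if x \in A then f x else g x).
Proof.
move=> fP gP fgP x y; rewrite !inE.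
case xA: (x \in A); case yA: (y \in A) => /= xB yB nxy exy.
- exact: fP.
- by apply: fgP; rewrite // inE yA.
- by rewrite eq_sym; apply: fgP; rewrite // ?inE ?xA // e_sym.
- exact: gP.
Qed.

Lemma chi_min (X : {set T}) k : colorable e X k -> chi e X <= k.
Proof. by rewrite /chi; case: ex_minnP => n _; apply. Qed.

Lemma chi_colorable (X : {set T}) : colorable e X (chi e X).
Proof. by rewrite /chi; case: ex_minnP. Qed.

Lemma colorableS (X Y : {set T}) k : Y \subset X -> colorable e X k -> colorable e Y k.
Proof.
move=> /subsetP YX /colorableP [f fP]; apply/colorableP; exists f.
by move=> x y /YX xX /YX yX; apply: fP.
Qed.

Lemma chiS (X Y : {set T}) : Y \subset X -> chi e Y <= chi e X.
Proof. by move=> YX; apply/chi_min/(colorableS YX)/chi_colorable. Qed.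

Lemma chiU (A B : {set T}) : chi e (A :|: B) <= chi e A + chi e B.
Proof.
have /colorableP [f fP] := chi_colorable A.
have /colorableP [g gP] := chi_colorable B.
apply/chi_min/colorableP.
exists (fun x => if x \in A then lshift (chi e B) (f x) else rshift (chi e A) (g x)).
apply: proper_onU => [||x y _ _ _]; last by rewrite eq_lrshift.
- exact: proper_on_comp (@lshift_inj _ _) fP.
- exact: proper_on_comp (@rshift_inj _ _) gP.
Qed.

Lemma chiU_separated (A B : {set T}) :
  (forall x y, x \in A -> y \in B :\: A -> ~~ e x y) ->
  chi e (A :|: B) <= maxn (chi e A) (chi e B).
Proof.
move=> sepAB.
have widen_inj n m (le_nm : n <= m) : injective (widen_ord le_nm).
  by move=> i j [] /val_inj.
have /colorableP [f fP] := chi_colorable A.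
have /colorableP [g gP] := chi_colorable B.
apply/chi_min/colorableP.
exists (fun x => if x \in A then widen_ord (leq_maxl _ _) (f x)
                 else widen_ord (leq_maxr _ _) (g x)).
apply: proper_onU => [||x y xA yBA exy]; last by have := sepAB x y xA yBA; rewrite exy.
- exact: proper_on_comp (widen_inj _ _ _) fP.
- exact: proper_on_comp (widen_inj _ _ _) gP.
Qed.

End Colorings.

Section Components.
Variables (T : finType) (e : rel T).
Hypothesis e_sym : symmetric e.

Definition induced_rel (X : {set T}) : rel T := [rel a b | [&& e a b, a \in X & b \in X]].

Lemma induced_rel_sym (X : {set T}) : symmetric (induced_rel X).
Proof. by move=> a b; rewrite /induced_rel /= e_sym (andbC (a \in X)). Qed.

Lemma connect_closed_sub (r r' : rel T) (S : {set T}) x y :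
  (forall a b, a \in S -> r a b -> (b \in S) && r' a b) ->
  x \in S -> connect r x y -> (y \in S) && connect r' x y.
Proof.
move=> Sr xS /connectP [p + ->] {y}.
elim: p x xS => [|b p IHp] x xS /=; first by rewrite xS connect0.
case/andP => /(Sr _ _ xS) /andP [bS rxb] /(IHp _ bS) /andP [-> r'bp].
exact: connect_trans (connect1 rxb) r'bp.
Qed.

Lemma connected_set_exit (S D : {set T}) d s :
  connected_set e S -> D \subset S -> d \in D -> s \in S :\: D ->
  exists a b, [/\ a \in D, b \in S :\: D & e a b].
Proof.
move=> [_ connS] /subsetP DS dD /setDP [sS sD].
suff /existsP [a /andP [aD /existsP [b /andP [bSD eab]]]] :
    [exists a in D, exists b in S :\: D, e a b] by exists a, b.
apply: contraT => /existsPn no_exit.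
have D_closed a b : a \in D -> induced_rel S a b -> (b \in D) && induced_rel S a b.
  move=> aD /[dup] Sab /and3P [eab _ bS]; rewrite Sab andbT.
  apply: contraT => bD; have := no_exit a; rewrite aD => /existsPn/(_ b).
  by rewrite !inE bD bS eab.
have /andP [sD' _] := connect_closed_sub D_closed dD (connS d s (DS d dD) sS).
by rewrite sD' in sD.
Qed.

Definition closed_in (X D : {set T}) : Prop :=
  forall a b, a \in D -> b \in X -> e a b -> b \in D.

Definition component (X : {set T}) (x : T) : {set T} :=
  [set y in X | connect (induced_rel X) x y].

Lemma component_sub (X : {set T}) x : component X x \subset X.
Proof. by apply/subsetP => y; rewrite inE => /andP []. Qed.

Lemma component_closed (X : {set T}) x : closed_in X (component X x).
Proof.
move=> a b; rewrite !inE => /andP [aX xa] bX eab; rewrite bX.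
by apply: connect_trans xa (connect1 _); rewrite /induced_rel /= eab aX bX.
Qed.

Lemma component_connected (X : {set T}) x : x \in X -> connected_set e (component X x).
Proof.
move=> xX; set D := component X x.
have xD : x \in D by rewrite inE xX connect0.
split; first by apply/set0Pn; exists x.
suff conn_x y : y \in D -> connect (induced_rel D) x y.
  move=> y z yD zD; apply: connect_trans (conn_x z zD).
  by rewrite (sym_connect_sym (induced_rel_sym D)) conn_x.
rewrite inE => /andP [_ xy].
suff /andP [] : (y \in D) && connect (induced_rel D) x y by [].
apply: connect_closed_sub xD xy => a b aD /and3P [eab _ bX].
have bD := component_closed aD bX eab.
by rewrite /induced_rel /= bD eab aD.
Qed.

Lemma exists_component_chi (X : {set T}) : X != set0 ->
  exists D : {set T}, [/\ D \subset X, connected_set e D, closed_in X D & chi e X <= chi e D].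
Proof.
have [n] := ubnP #|X|; elim: n X => // n IHn X /ltnSE leXn /set0Pn [x xX].
set D0 := component X x; have D0X := component_sub X x.
have xD0 : x \in D0 by rewrite inE xX connect0.
have [leXD0 | ltD0X] := leqP (chi e X) (chi e D0).
  by exists D0; split => //; [exact: component_connected | exact: component_closed].
set Y := X :\: D0.
have Y0 : Y != set0.
  by apply: contraTneq ltD0X => /eqP; rewrite /Y setD_eq0 -leqNgt => /(chiS e).
have chiX : chi e X <= maxn (chi e D0) (chi e Y).
  have sep a b : a \in D0 -> b \in Y :\: D0 -> ~~ e a b.
    move=> aD0 /setDP [/setDP [bX _] bD0]; apply: contra bD0.
    exact: component_closed aD0 bX.
  apply: leq_trans _ (chiU_separated e_sym sep); apply: chiS.
  by apply/subsetP => y yX; rewrite !inE yX andbT orbN.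
have ltYn : #|Y| < n.
  apply: leq_trans leXn; apply/proper_card/properP; split; first exact: subsetDl.
  by exists x; rewrite // inE xD0.
have [D [DY cD clD chiYD]] := IHn Y ltYn Y0.
exists D; split => //.
- exact: subset_trans DY (subsetDl _ _).
- move=> a b aD bX eab; have /setDP [aX aD0] := subsetP DY a aD.
  have bY : b \in Y.
    rewrite inE bX andbT; apply: contra aD0 => bD0.
    by apply: (component_closed bD0 aX); rewrite e_sym.
  exact: clD aD bY eab.
- by move: chiX ltD0X chiYD; lia.
Qed.

End Components.

Section Growth.
Variables (T : finType) (e : rel T).
Hypotheses (e_sym : symmetric e) (e_irr : irreflexive e).

Lemma has_nbr_inP v (X : {set T}) :
  reflect (exists2 u, u \in X & e v u) (has_nbr_in e v X).
Proof.
apply: (iffP existsP) => [[u /andP [uX evu]] | [u uX evu]]; exists u => //.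
by rewrite uX.
Qed.

Lemma has_nbr_inS v (X Y : {set T}) : Y \subset X -> has_nbr_in e v Y -> has_nbr_in e v X.
Proof. by move=> /subsetP YX /has_nbr_inP [u /YX uX evu]; apply/has_nbr_inP; exists u. Qed.

Lemma chi_nbrs_le_chi1 v (X : {set T}) : chi e [set u in X | e v u] <= chi1 e.
Proof.
apply: (@leq_trans (chi e (nbhd1 e v))); last exact: leq_bigmax.
by apply: chiS; apply/subsetP => u; rewrite !inE => /andP [_ ->]; rewrite orbT.
Qed.

Lemma grow_step v (C : {set T}) :
  connected_set e C -> has_nbr_in e v C -> chi1 e < chi e C ->
  exists y (D : {set T}), [/\ y \in C, e v y, D \subset C & connected_set e D] /\
    [/\ ~~ has_nbr_in e v D, has_nbr_in e y D & chi e C - chi1 e <= chi e D].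
Proof.
move=> cC /has_nbr_inP [u uC evu] ltC.
set N := [set u in C | e v u]; set R := C :\: N.
have chiC : chi e C <= chi e R + chi e N.
  apply: leq_trans (chiU e_sym R N); apply: chiS.
  by apply/subsetP => w wC; rewrite !inE wC andbT orNb.
have chiN : chi e N <= chi1 e := chi_nbrs_le_chi1 v C.
have R0 : R != set0.
  by apply: contraTneq ltC => /eqP; rewrite setD_eq0 -leqNgt => /(chiS e) /leq_trans; apply.
have [D [DR cD clD chiRD]] := exists_component_chi e_sym R0.
have DC : D \subset C := subset_trans DR (subsetDl C N).
have noN w : w \in D -> e v w = false.
  move=> /(subsetP DR); rewrite !inE => /andP [nN wC].
  by move: nN; rewrite wC => /negbTE.
have [d dD] := set0Pn _ (proj1 cD).
have uCD : u \in C :\: D.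
  by rewrite inE uC andbT; apply: contraTN evu => /noN ->.
have [a [y [aD /setDP [yC yD] eay]]] := connected_set_exit cC DC dD uCD.
have yN : y \in N.
  apply: contraT => yN; have yR : y \in R by rewrite inE yN yC.
  by rewrite (clD a y aD yR eay) in yD.
exists y, D; split; split => //.
- by move: yN; rewrite inE => /andP [].
- by apply/has_nbr_inP => -[w /noN ->].
- by apply/has_nbr_inP; exists a; rewrite // e_sym.
- by move: chiC chiN chiRD; lia.
Qed.

(* Paths are indexed by nat, with only q 0, ..., q k relevant, so that they can
   grow without casts between ordinal types. *)
Definition induced_npath k (q : nat -> T) : Prop :=
  (forall i j, i <= k -> j <= k -> q i = q j -> i = j) /\
  (forall i j, i <= k -> j <= k -> e (q i) (q j) = (i.+1 == j) || (j.+1 == i)).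

Definition extend_npath k (q : nat -> T) (y : T) (n : nat) : T := if n <= k then q n else y.

Lemma induced_npath_extend k q y :
  induced_npath k q -> (forall i, i <= k -> q i != y) ->
  (forall i, i <= k -> e (q i) y = (i == k)) ->
  induced_npath k.+1 (extend_npath k q y).
Proof.
move=> [q_inj q_edge] q_neq_y q_edge_y; rewrite /extend_npath; split=> i j ik jk.
- case: (leqP i k) => ik'; case: (leqP j k) => jk'.
  + exact: q_inj.
  + by move/eqP; rewrite (negbTE (q_neq_y i ik')).
  + by move/esym/eqP; rewrite (negbTE (q_neq_y j jk')).
  + by move=> _; lia.
- case: (leqP i k) => ik'; case: (leqP j k) => jk'.
  + exact: q_edge.
  + by rewrite q_edge_y //; lia.
  + by rewrite e_sym q_edge_y //; lia.
  + by rewrite e_irr; lia.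
Qed.

Lemma induced_npath_ord k (q : nat -> T) :
  induced_npath k q -> induced_path e (fun i : 'I_k.+1 => q i).
Proof.
move=> [q_inj q_edge]; split=> [i j qij | i j]; last exact: q_edge (ltn_ord i) (ltn_ord j).
exact/val_inj/(q_inj _ _ (ltn_ord i) (ltn_ord j) qij).
Qed.

Definition path_into (C : {set T}) k (q : nat -> T) (C' : {set T}) : Prop :=
  [/\ induced_npath k q, forall i, 0 < i <= k -> q i \in C, C' \subset C,
      forall i, i <= k -> q i \notin C' & connected_set e C'] /\
  has_nbr_in e (q k) C' /\ forall i, i < k -> ~~ has_nbr_in e (q i) C'.

Lemma path_into0 (C : {set T}) x0 :
  x0 \notin C -> connected_set e C -> has_nbr_in e x0 C -> path_into C 0 (fun=> x0) C.
Proof.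
move=> x0C cC nbr; split; split=> //; first split=> i j i0 j0.
- by lia.
- by rewrite e_irr; lia.
- by lia.
Qed.

Lemma path_into_extend (C : {set T}) k q (C' : {set T}) :
  path_into C k q C' -> chi1 e < chi e C' ->
  exists y (D : {set T}),
    path_into C k.+1 (extend_npath k q y) D /\ chi e C' - chi1 e <= chi e D.
Proof.
move=> [[qP qC C'C qC' cC'] [nbr_k no_nbr]] ltC'.
have [y [D [[yC' eky DC' cD] [no_nbr_kD nbr_yD chiD]]]] := grow_step cC' nbr_k ltC'.
have no_nbrS i : i <= k -> ~~ has_nbr_in e (q i) D.
  rewrite leq_eqVlt => /orP [/eqP-> // | ik].
  by apply: contra (no_nbr i ik); apply: has_nbr_inS.
have q_edge_y i : i <= k -> e (q i) y = (i == k).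
  rewrite leq_eqVlt => /orP [/eqP-> | ik]; first by rewrite eky eqxx.
  rewrite (ltn_eqF ik); apply: contraNF (no_nbr i ik) => eiy.
  by apply/has_nbr_inP; exists y.
have q_neq_y i : i <= k -> q i != y by move=> ik; apply: contraNneq (qC' i ik) => ->.
exists y, D; split => //; rewrite /extend_npath; split; split => //.
- exact: induced_npath_extend.
- move=> i /andP [i0 ik]; case: leqP => [ik' | _]; first by apply: qC; rewrite i0.
  exact: (subsetP C'C).
- exact: subset_trans DC' C'C.
- move=> i ik; case: leqP => ik'; first by apply: contra (qC' i ik'); apply: (subsetP DC').
  by apply: contra no_nbr_kD => yD; apply/has_nbr_inP; exists y.
- by rewrite ltnn.
- by move=> i ik; rewrite ltnS in ik; rewrite ik; apply: no_nbrS.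
Qed.

Lemma grow_path (C : {set T}) x0 k :
  x0 \notin C -> connected_set e C -> has_nbr_in e x0 C -> k * chi1 e < chi e C ->
  exists q (C' : {set T}),
    [/\ q 0 = x0, path_into C k q C' & chi e C - k * chi1 e <= chi e C'].
Proof.
move=> x0C cC nbr; elim: k => [|k IHk] ltC.
  by exists (fun=> x0), C; split; [| exact: path_into0 | lia].
have [|q [C' [q0 qP chiC']]] := IHk; first by move: ltC; rewrite mulSn; lia.
have [|y [D [DP chiD]]] := path_into_extend qP; first by move: ltC chiC'; rewrite mulSn; lia.
by exists (extend_npath k q y), D; split => //; move: chiC' chiD; rewrite mulSn; lia.
Qed.

End Growth.

Theorem mainTheorem4 (T : finType) (e : rel T)
  (e_sym : symmetric e) (e_irr : irreflexive e)
  (k : nat) (C : {set T}) (x0 : T) :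
  x0 \notin C ->
  connected_set e C ->
  has_nbr_in e x0 C ->
  k * chi1 e < chi e C ->
  exists (p : 'I_k.+1 -> T) (C' : {set T}),
    induced_path e p /\
    p ord0 = x0 /\
    (forall i : 'I_k.+1, 0 < i -> p i \in C) /\
    C' \subset C /\
    (forall i : 'I_k.+1, p i \notin C') /\
    connected_set e C' /\
    has_nbr_in e (p ord_max) C' /\
    (forall i : 'I_k.+1, i < k -> ~~ has_nbr_in e (p i) C') /\
    chi e C - k * chi1 e <= chi e C'.
Proof.
move=> x0C cC nbr ltC.
have [q [C' [q0 [[qP qC C'C qC' cC'] [nbr_k no_nbr]] chiC']]] :=
  grow_path e_sym e_irr x0C cC nbr ltC.
exists (fun i => q i), C'.
split; first exact: induced_npath_ord qP.
split; first exact: q0.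
split; first by move=> i i0; apply: qC; rewrite i0 -ltnS ltn_ord.
split; first exact: C'C.
split; first by move=> i; apply: qC'; rewrite -ltnS ltn_ord.
split; first exact: cC'.
split; first exact: nbr_k.
split; first by move=> i; apply: no_nbr.
exact: chiC'.
Qed.
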